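(* Let $q\ge 2$, $\eta\ge 1$, $u\ge 1$ and $n\ge 1$ be integers, and let $\mathcal{C}\subseteq\{0,1,\dots,q-1\}^n$ be a code consisting of $N\ge u+1$ distinct codewords. Then $\mathcal{C}$ is a $[q;Q;\eta;u]$-SQ-disjunct code if and only if no codeword is included in a set of $u$ other codewords; that is, if and only if for every $\mathbf{x}\in\mathcal{C}$ and every set $\mathcal{Z}\subseteq\mathcal{C}\setminus\{\mathbf{x}\}$ with $|\mathcal{Z}|=u$, it is not the case that $\{\mathbf{x}\}\lhd\mathcal{Z}$.
   Context: Semi-quantitative group testing with equidistant thresholds: $\eta$ is a positive integer (the threshold spacing). For $s\ge 1$ vectors $\mathbf{x}_1,\dots,\mathbf{x}_s\in\{0,\dots,q-1\}^n$, their SQ-sum (syndrome) is the vector $\mathbf{y}=\mathbf{x}_1\circledast\cdots\circledast\mathbf{x}_s$ of length $n$ with $i$-th coordinate $y_i=\left\lfloor\frac{x_{i,1}+\cdots+x_{i,s}}{\eta}\right\rfloor$ (ordinary integer addition), where $x_{i,j}$ is the $i$-th coordinate of $\mathbf{x}_j$. A set of codewords $\mathcal{X}$ with syndrome $\mathbf{y}_{\mathcal{X}}$ is included in a set of codewords $\mathcal{Z}$ with syndrome $\mathbf{y}_{\mathcal{Z}}$, written $\mathcal{X}\lhd\mathcal{Z}$, if $(\mathbf{y}_{\mathcal{X}})_i\le(\mathbf{y}_{\mathcal{Z}})_i$ for all $i=1,\dots,n$. A code $\mathcal{C}$ of length $n$ is a $[q;Q;\eta;u]$-SQ-disjunct code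 if for all $1\le s,t\le u$ and all sets $\mathcal{X}=\{\mathbf{x}_1,\dots,\mathbf{x}_s\}\subseteq\mathcal{C}$, $\mathcal{Z}=\{\mathbf{z}_1,\dots,\mathbf{z}_t\}\subseteq\mathcal{C}$ of codewords, $\mathcal{X}\lhd\mathcal{Z}$ implies $\mathcal{X}\subseteq\mathcal{Z}$. (Here $Q$ denotes the number of possible test outcomes and is assumed large enough that no outcome saturates; it plays no further role.) *)

From mathcomp Require Import all_boot.
Set Implicit Arguments. Unset Strict Implicit. Unset Printing Implicit Defensive.

Definition word (q n : nat) := {ffun 'I_n -> 'I_q}.

Definition syndrome (q n eta : nat) (X : {set word q n}) : 'I_n -> nat :=
  fun i => (\sum_(x in X) (x i : nat)) %/ eta.

Definition included (q n eta : nat) (X Z : {set word q n}) : Prop :=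
  forall i : 'I_n, syndrome eta X i <= syndrome eta Z i.

(* [q;Q;eta;u]-SQ-disjunct code (Q plays no role). *)
Definition SQ_disjunct (q n eta u : nat) (C : {set word q n}) : Prop :=
  forall X Z : {set word q n},
    X \subset C -> Z \subset C ->
    1 <= #|X| <= u -> 1 <= #|Z| <= u ->
    included eta X Z -> X \subset Z.

From mathcomp Require Import all_boot.

(* Syndromes are monotone under inclusion of codeword sets, since all entries
   are nonnegative.  Hence if some x in X is not in Z, then {x} <| X <| Z, and
   padding Z with further codewords other than x up to size u keeps
   {x} <| Z; so the u-subset condition alone already forces X \subset Z. *)

Lemma included_subset {q n eta : nat} {X Y : {set word q n}} :
  X \subset Y -> included eta X Y.
Proof.
move=> /subsetP XY i; apply: leq_div2r.
exact: (sub_le_big leqnn (fun m n => leq_addr n m) _ XY).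
Qed.

Lemma included_trans {q n eta : nat} {X Y Z : {set word q n}} :
  included eta X Y -> included eta Y Z -> included eta X Z.
Proof. by move=> XY YZ i; exact: leq_trans (XY i) (YZ i). Qed.

Lemma extend_to_card {T : finType} {Z B : {set T}} {k : nat} :
  Z \subset B -> #|Z| <= k <= #|B| ->
  exists Z' : {set T}, [/\ Z \subset Z', Z' \subset B & #|Z'| = k].
Proof.
move=> ZB; elim: k => [|k IHk] /andP[Zk kB].
  by exists Z; split; rewrite ?subxx //; apply/eqP; rewrite -leqn0.
case: (ltngtP #|Z| k.+1) Zk => // [Zk _ | <- _]; last by exists Z; rewrite subxx.
have /IHk[Z' [ZZ' Z'B Z'k]] : #|Z| <= k <= #|B| by rewrite -ltnS Zk ltnW.
have [y /setDP[yB yZ']] : exists y, y \in B :\: Z'.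
  by apply/set0Pn; rewrite -card_gt0 cardsDS // Z'k subn_gt0.
exists (y |: Z'); split; last by rewrite cardsU1 yZ' Z'k.
  exact: subset_trans ZZ' (subsetUr _ _).
by rewrite subUset sub1set yB Z'B.
Qed.

Theorem proposition1 (q eta u n : nat) (C : {set word q n}) :
  2 <= q -> 1 <= eta -> 1 <= u -> 1 <= n -> u + 1 <= #|C| ->
  SQ_disjunct eta u C <->
  (forall (x : word q n) (Z : {set word q n}),
      x \in C -> Z \subset C :\ x -> #|Z| = u ->
      ~ included eta [set x] Z).
Proof.
move=> _ _ u_gt0 _ uC; split.
  move=> disjunct x Z xC ZCx Zu xZ.
  have ZC : Z \subset C := subset_trans ZCx (subsetDl _ _).
  have := disjunct [set x] Z; rewrite sub1set xC cards1 Zu u_gt0 !leqnn.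
  move=> /(_ isT ZC isT isT xZ); rewrite sub1set => /(subsetP ZCx).
  by rewrite !inE eqxx.
move=> no_incl X Z XC ZC /andP[_ Xu] /andP[_ Zu] XZ.
apply/subsetP => x xX; apply: contraT => xZ.
have xC : x \in C := subsetP XC x xX.
have ZCx : Z \subset C :\ x by rewrite subsetD1 ZC.
have uCx : u <= #|C :\ x| by move: uC; rewrite (cardsD1 x C) xC addn1 add1n ltnS.
have /(extend_to_card ZCx)[Z' [ZZ' Z'Cx Z'u]] : #|Z| <= u <= #|C :\ x|.
  by rewrite Zu uCx.
case: (no_incl x Z' xC Z'Cx Z'u).
apply: included_trans (included_subset ZZ').
by apply: included_trans XZ; apply: included_subset; rewrite sub1set.
Qed.
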